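(* For all $n,k\in\mathbb{N}$ with $k\ge1$ and $n\ge k+2$, setting $x_k:=\big(1-\frac{k^2}{n^2}\big)^{1/2}$, we have $$\tau_{n,k}<\delta_{n,k}:=\frac{D_{n,k}(x_k)}{T_n^{(k)}(1)}.$$
   Context: $T_n$ denotes the Chebyshev polynomial of the first kind of degree $n$, $T_n(\cos\theta)=\cos n\theta$. For integers $n\ge k+2$, $k\ge 1$, let $\omega_{n,k}$ be the rightmost (largest) zero of $T_n^{(k+1)}$ and define $\tau_{n,k}:=|T_n^{(k)}(\omega_{n,k})|/T_n^{(k)}(1)$. Let $S_n(x):=\frac1n\sqrt{1-x^2}\,T_n'(x)$ and define the Duffin–Schaeffer majorant $D_{n,k}(x):=\big([T_n^{(k)}(x)]^2+[S_n^{(k)}(x)]^2\big)^{1/2}$ for $x\in(-1,1)$. *)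

From Stdlib Require Import Reals.
From Coquelicot Require Import Coquelicot.
Open Scope R_scope.

(* Chebyshev polynomial of the first kind T_n, as a real function, defined by
   the three-term recurrence T_0 = 1, T_1 = x, T_{n+2} = 2x T_{n+1} - T_n
   (equivalently T_n(cos t) = cos (n t)). *)
Fixpoint cheb_pair (n : nat) (x : R) : R * R :=
  match n with
  | O => (1, x)
  | S m => let p := cheb_pair m x in (snd p, 2 * x * snd p - fst p)
  end.

Definition Cheb (n : nat) (x : R) : R := fst (cheb_pair n x).

Definition dCheb (n k : nat) (x : R) : R := Derive_n (Cheb n) k x.

Definition Sfun (n : nat) (x : R) : R :=
  / INR n * sqrt (1 - x ^ 2) * Derive (Cheb n) x.

(* Duffin–Schaeffer majorant D_{n,k}(x) = sqrt((T_n^{(k)}(x))^2 + (S_n^{(k)}(x))^2),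
   meaningful for x in (-1,1). *)
Definition DS (n k : nat) (x : R) : R :=
  sqrt ((dCheb n k x) ^ 2 + (Derive_n (Sfun n) k x) ^ 2).

Definition is_rightmost_zero (n k : nat) (omega : R) : Prop :=
  dCheb n (k + 1) omega = 0 /\
  (forall y, dCheb n (k + 1) y = 0 -> y <= omega).

Definition tau (n k : nat) (omega : R) : R :=
  Rabs (dCheb n k omega) / dCheb n k 1.

Definition xk (n k : nat) : R := sqrt (1 - (INR k) ^ 2 / (INR n) ^ 2).

Definition delta (n k : nat) : R := DS n k (xk n k) / dCheb n k 1.

(* Write u = T_n^(k).  Since D_{n,k} >= |u| and u(1) > 0, it suffices to show
   |u(omega)| < u(x_k).  The derivatives u_j = T_n^(j) satisfy
   (1 - x^2) u_j'' - (2j + 1) x u_j' + (n^2 - j^2) u_j = 0.  By downward induction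
   on j, u_j > 0 on [x_j, oo) and u_{j+1} < (n^2 x_j / j) u_j on [x_j, 1]: at a
   first point where the ratio bound fails the equation forces it to hold just
   to the right.  Hence 0 <= omega < x_k (the zeros of u' are symmetric).  On
   [omega, x_k] the Sonin-type function Lambda = u^2 + h^2 / D, with
   h = (1 - x^2) u' - a x u, the slope a chosen so that h(x_k) = 0 and D > 0 a
   suitable quadratic, has a positive derivative by the equation, so
   u(omega)^2 <= Lambda(omega) < Lambda(x_k) = u(x_k)^2. *)

From Stdlib Require Import Reals Lra Lia List.
From Coquelicot Require Import Coquelicot.
Open Scope R_scope.

(** * Polynomial functions *)

Fixpoint peval (p : list R) (x : R) : R :=
  match p with nil => 0 | a :: q => a + x * peval q x end.

Fixpoint padd (p q : list R) : list R :=
  match p, q with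
  | nil, _ => q
  | _, nil => p
  | a :: p', b :: q' => (a + b) :: padd p' q'
  end.

Definition pscal (c : R) (p : list R) : list R := map (Rmult c) p.

(* [(a + x q)' = q + x q'], with the derivative of a constant taken to be [nil]
   so that differentiation lowers the length by exactly one. *)
Fixpoint pder (p : list R) : list R :=
  match p with
  | nil => nil
  | _ :: nil => nil
  | _ :: q => padd q (0 :: pder q)
  end.

Lemma peval_padd p q x : peval (padd p q) x = peval p x + peval q x.
Proof.
  revert q; induction p as [|a p IH]; intros [|b q]; simpl; try ring.
  rewrite IH; ring.
Qed.

Lemma peval_pscal c p x : peval (pscal c p) x = c * peval p x.
Proof. induction p as [|a p IH]; simpl; [ring|]. rewrite IH; ring. Qed.

Lemma length_padd p q : length (padd p q) = Nat.max (length p) (length q).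
Proof. revert q; induction p as [|a p IH]; intros [|b q]; simpl; auto. Qed.

Lemma length_pder p : length (pder p) = pred (length p).
Proof.
  induction p as [|a [|b p] IH]; simpl; auto.
  rewrite length_padd; simpl in *; lia.
Qed.

Lemma is_derive_affine_mult (g : R -> R) (a x g' : R) :
  is_derive g x g' -> is_derive (fun y => a + y * g y) x (g x + x * g').
Proof.
  intros Hg. auto_derive; [exists g'; exact Hg|].
  erewrite is_derive_unique by exact Hg; ring.
Qed.

Lemma is_derive_peval p x : is_derive (peval p) x (peval (pder p) x).
Proof.
  induction p as [|a [|b q] IH].
  - simpl. auto_derive; auto.
  - simpl. auto_derive; auto; ring.
  - change (pder (a :: b :: q)) with (padd (b :: q) (0 :: pder (b :: q))).
    rewrite peval_padd. replace (peval (0 :: pder (b :: q)) x) with (x * peval (pder (b :: q)) x)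
      by (simpl; ring).
    exact (is_derive_affine_mult (peval (b :: q)) a x _ IH).
Qed.

Lemma Derive_n_peval p j x : Derive_n (peval p) j x = peval (Nat.iter j pder p) x.
Proof.
  revert x; induction j as [|j IH]; intros x; simpl; auto.
  rewrite (Derive_ext _ _ _ IH).
  apply is_derive_unique, is_derive_peval.
Qed.

Lemma length_iter_pder p j : length (Nat.iter j pder p) = (length p - j)%nat.
Proof. induction j as [|j IH]; simpl; [lia|]. rewrite length_pder, IH; lia. Qed.

Fixpoint cheb_coeffs_pair (n : nat) : list R * list R :=
  match n with
  | O => (1 :: nil, 0 :: 1 :: nil)
  | S m => let p := cheb_coeffs_pair m in
           (snd p, padd (0 :: pscal 2 (snd p)) (pscal (-1) (fst p)))
  end.

Definition cheb_coeffs (n : nat) : list R := fst (cheb_coeffs_pair n).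

Lemma cheb_pair_peval n x :
  cheb_pair n x = (peval (fst (cheb_coeffs_pair n)) x, peval (snd (cheb_coeffs_pair n)) x).
Proof.
  induction n as [|m IH]; [simpl; f_equal; ring|].
  cbn [cheb_pair cheb_coeffs_pair]. rewrite IH; cbn [fst snd].
  rewrite peval_padd, !peval_pscal; cbn [peval]. rewrite peval_pscal. f_equal; ring.
Qed.

Lemma length_cheb_coeffs n : length (cheb_coeffs n) = S n.
Proof.
  enough (H : length (fst (cheb_coeffs_pair n)) = S n /\
              length (snd (cheb_coeffs_pair n)) = S (S n)) by apply H.
  induction n as [|m [IH1 IH2]]; [simpl; auto|].
  cbn [cheb_coeffs_pair fst snd]. split; [exact IH2|].
  rewrite length_padd; cbn [length]; unfold pscal; rewrite !length_map; lia.
Qed.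

Lemma dCheb_peval n j x : dCheb n j x = peval (Nat.iter j pder (cheb_coeffs n)) x.
Proof.
  unfold dCheb. rewrite <- Derive_n_peval. apply Derive_n_ext; intros t.
  unfold Cheb, cheb_coeffs. rewrite cheb_pair_peval; reflexivity.
Qed.

Lemma is_derive_dCheb n j x : is_derive (dCheb n j) x (dCheb n (S j) x).
Proof.
  rewrite dCheb_peval; simpl.
  eapply is_derive_ext; [intros t; symmetry; apply dCheb_peval|].
  apply is_derive_peval.
Qed.

(* Eta-expanded, to match the terms produced by [auto_derive]. *)
Lemma Derive_dCheb n j x : Derive (fun y => dCheb n j y) x = dCheb n (S j) x.
Proof. apply is_derive_unique, is_derive_dCheb. Qed.

Lemma ex_derive_dCheb n j x : ex_derive (dCheb n j) x.
Proof. eexists; apply is_derive_dCheb. Qed.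

Lemma continuity_pt_dCheb n j x : continuity_pt (dCheb n j) x.
Proof.
  apply derivable_continuous_pt; exists (dCheb n (S j) x).
  apply is_derive_Reals, is_derive_dCheb.
Qed.

Lemma dCheb_above_degree n j x : (n < j)%nat -> dCheb n j x = 0.
Proof.
  intros Hj. rewrite dCheb_peval.
  assert (H : length (Nat.iter j pder (cheb_coeffs n)) = 0%nat)
    by (rewrite length_iter_pder, length_cheb_coeffs; lia).
  destruct (Nat.iter j pder (cheb_coeffs n)); [reflexivity|discriminate].
Qed.

Lemma Cheb_0 x : Cheb 0 x = 1.
Proof. reflexivity. Qed.

Lemma Cheb_1 x : Cheb 1 x = x.
Proof. reflexivity. Qed.

Lemma Cheb_SS m x : Cheb (S (S m)) x = 2 * x * Cheb (S m) x - Cheb m x.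
Proof. reflexivity. Qed.

Lemma dCheb_0 n x : dCheb n 0 x = Cheb n x.
Proof. reflexivity. Qed.

Lemma dCheb_1_1 x : dCheb 1 1 x = 1.
Proof. rewrite dCheb_peval; simpl; ring. Qed.

Ltac auto_derive_dCheb :=
  auto_derive; [repeat split; apply ex_derive_dCheb | rewrite ?Derive_dCheb].

Ltac solve_derive_dCheb := apply is_derive_unique; auto_derive_dCheb.

(** * Chebyshev identities *)

Lemma nat_ind2 (P : nat -> Prop) :
  P 0%nat -> P 1%nat -> (forall m, P m -> P (S m) -> P (S (S m))) -> forall n, P n.
Proof.
  intros H0 H1 HS n. enough (H : P n /\ P (S n)) by apply H.
  induction n as [|n [IH1 IH2]]; split; auto.
Qed.

Lemma dCheb_recurrence m j x :
  dCheb (S (S m)) (S j) x =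
  2 * INR (S j) * dCheb (S m) j x + 2 * x * dCheb (S m) (S j) x - dCheb m (S j) x.
Proof.
  revert x; induction j as [|j IH]; intros x.
  - change (dCheb (S (S m)) 1 x) with (Derive (fun y => 2 * y * dCheb (S m) 0 y - dCheb m 0 y) x).
    solve_derive_dCheb. simpl; ring.
  - change (dCheb (S (S m)) (S (S j)) x) with (Derive (dCheb (S (S m)) (S j)) x).
    rewrite (Derive_ext _ _ _ IH).
    (* [c] keeps [auto_derive] from unfolding [INR (S j)]. *)
    set (c := INR (S j)). solve_derive_dCheb.
    rewrite (S_INR (S j)); fold c; ring.
Qed.

Lemma Cheb_deriv_identity m x :
  (1 - x ^ 2) * dCheb (S m) 1 x = INR (S m) * (Cheb m x - x * Cheb (S m) x).
Proof.
  revert x; induction m as [| |m IH1 IH2] using nat_ind2; intros x.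
  - rewrite dCheb_1_1, Cheb_0, Cheb_1; simpl; ring.
  - rewrite (dCheb_recurrence 0 0), dCheb_0, dCheb_1_1, (dCheb_above_degree 0 1), Cheb_SS, Cheb_0, Cheb_1
      by lia.
    simpl; ring.
  - rewrite (dCheb_recurrence (S m) 0), dCheb_0.
    transitivity (2 * (1 - x ^ 2) * Cheb (S (S m)) x + 2 * x * ((1 - x ^ 2) * dCheb (S (S m)) 1 x)
                  - (1 - x ^ 2) * dCheb (S m) 1 x); [simpl; ring|].
    rewrite IH1, IH2, (Cheb_SS (S m)), (Cheb_SS m), !S_INR; ring.
Qed.

Lemma Cheb_ode m x :
  (1 - x ^ 2) * dCheb m 2 x - x * dCheb m 1 x + INR m ^ 2 * Cheb m x = 0.
Proof.
  revert x; induction m as [| |m IH1 IH2] using nat_ind2; intros x.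
  - rewrite !(dCheb_above_degree 0), Cheb_0 by lia; simpl; ring.
  - rewrite (dCheb_above_degree 1 2), dCheb_1_1, Cheb_1 by lia; simpl; ring.
  - rewrite (dCheb_recurrence m 1), (dCheb_recurrence m 0), dCheb_0, (Cheb_SS m).
    transitivity (2 * x * ((1 - x ^ 2) * dCheb (S m) 2 x - x * dCheb (S m) 1 x + INR (S m) ^ 2 * Cheb (S m) x)
      - ((1 - x ^ 2) * dCheb m 2 x - x * dCheb m 1 x + INR m ^ 2 * Cheb m x)
      + 4 * ((1 - x ^ 2) * dCheb (S m) 1 x - INR (S m) * (Cheb m x - x * Cheb (S m) x)));
      [rewrite !S_INR; simpl; ring|].
    rewrite IH1, IH2, Cheb_deriv_identity; ring.
Qed.

Lemma ode_differentiate (f0 f1 f2 f3 : R -> R) (a b : R) :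
  (forall x, is_derive f0 x (f1 x)) -> (forall x, is_derive f1 x (f2 x)) ->
  (forall x, is_derive f2 x (f3 x)) ->
  (forall x, (1 - x ^ 2) * f2 x - a * x * f1 x + b * f0 x = 0) ->
  forall x, (1 - x ^ 2) * f3 x - (a + 2) * x * f2 x + (b - a) * f1 x = 0.
Proof.
  intros D0 D1 D2 Hode x.
  rewrite <- (Derive_const 0 x).
  rewrite <- (Derive_ext _ _ x Hode).
  symmetry; apply is_derive_unique. auto_derive.
  - repeat split; eexists; eauto.
  - erewrite !is_derive_unique by eauto; ring.
Qed.

Lemma dCheb_ode n j x :
  (1 - x ^ 2) * dCheb n (S (S j)) x - (2 * INR j + 1) * x * dCheb n (S j) x
  + (INR n ^ 2 - INR j ^ 2) * dCheb n j x = 0.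
Proof.
  revert x; induction j as [|j IH]; intros x.
  - rewrite dCheb_0, INR_0. pose proof (Cheb_ode n x). lra.
  - pose proof (ode_differentiate _ _ _ _ _ _ (is_derive_dCheb n j) (is_derive_dCheb n (S j))
                  (is_derive_dCheb n (S (S j))) IH x) as H.
    rewrite S_INR, <- H; ring.
Qed.

Lemma Cheb_at_1 n : Cheb n 1 = 1.
Proof.
  unfold Cheb. enough (H : cheb_pair n 1 = (1, 1)) by (rewrite H; reflexivity).
  induction n as [|n IH]; simpl; [reflexivity|]. rewrite IH; simpl; f_equal; ring.
Qed.

Lemma dCheb_at_1_pos n j : (j <= n)%nat -> 0 < dCheb n j 1.
Proof.
  induction j as [|j IH]; intros Hj.
  - rewrite dCheb_0, Cheb_at_1; lra.
  - assert (Hrec : (2 * INR j + 1) * dCheb n (S j) 1 = (INR n ^ 2 - INR j ^ 2) * dCheb n j 1)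
      by (pose proof (dCheb_ode n j 1); lra).
    assert (Hjn : INR j < INR n) by (apply lt_INR; lia).
    pose proof (pos_INR j). pose proof (IH ltac:(lia)).
    assert (0 < (INR n ^ 2 - INR j ^ 2) * dCheb n j 1) by (apply Rmult_lt_0_compat; nra).
    nra.
Qed.

Lemma Cheb_opp n x : Cheb n (- x) = (-1) ^ n * Cheb n x.
Proof.
  unfold Cheb.
  enough (H : forall m, fst (cheb_pair m (- x)) = (-1) ^ m * fst (cheb_pair m x) /\
                        snd (cheb_pair m (- x)) = (-1) ^ S m * snd (cheb_pair m x)) by apply H.
  induction m as [|m [IH1 IH2]]; simpl in *; [split; ring|].
  split; [exact IH2|]. rewrite IH1, IH2; ring.
Qed.

Lemma dCheb_opp n j x : (-1) ^ j * dCheb n j (- x) = (-1) ^ n * dCheb n j x.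
Proof.
  unfold dCheb. rewrite <- Derive_n_comp_opp, <- Derive_n_scal_l.
  - apply Derive_n_ext; intros t; apply Cheb_opp.
  - apply filter_forall; intros y [|k] _; [exact I|apply ex_derive_dCheb].
Qed.

Lemma dCheb_opp_root n j x : dCheb n j x = 0 -> dCheb n j (- x) = 0.
Proof.
  intros H. pose proof (dCheb_opp n j x) as E. rewrite H, Rmult_0_r in E.
  destruct (Rmult_integral _ _ E) as [E'|E']; [|exact E'].
  exfalso; exact (pow_nonzero (-1) j ltac:(lra) E').
Qed.

(** * Positivity of the derivatives to the right of [xk] *)

Lemma continuity_pt_gt_nbhd (f : R -> R) c l :
  continuity_pt f c -> l < f c -> exists d, 0 < d /\ forall y, Rabs (y - c) < d -> l < f y.
Proof.
  intros Hf Hc. apply continuity_pt_filterlim in Hf.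
  destruct (Hf _ (open_gt l _ Hc)) as [d Hd].
  exists d; split; [apply cond_pos | exact Hd].
Qed.

Lemma continuity_pt_lt_nbhd (f : R -> R) c l :
  continuity_pt f c -> f c < l -> exists d, 0 < d /\ forall y, Rabs (y - c) < d -> f y < l.
Proof.
  intros Hf Hc. apply continuity_pt_filterlim in Hf.
  destruct (Hf _ (open_lt l _ Hc)) as [d Hd].
  exists d; split; [apply cond_pos | exact Hd].
Qed.

Lemma is_derive_pos_increases_right (f : R -> R) c l b :
  is_derive f c l -> 0 < l -> c < b -> exists y, c < y <= b /\ f c < f y.
Proof.
  intros Hd Hl Hb. apply is_derive_Reals in Hd.
  destruct (Hd l Hl) as [[e He] Hq]. simpl in Hq.
  set (h := Rmin (e / 2) (b - c)).
  assert (Hh : 0 < h) by (apply Rmin_pos; lra).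
  assert (Hhb : h <= b - c) by apply Rmin_r.
  assert (Hhe : h <= e / 2) by apply Rmin_l.
  assert (Q : Rabs ((f (c + h) - f c) / h - l) < l)
    by (apply Hq; [lra | rewrite Rabs_right; lra]).
  apply Rabs_def2 in Q.
  exists (c + h); split; [lra|].
  assert (0 < (f (c + h) - f c) / h * h) by (apply Rmult_lt_0_compat; lra).
  replace ((f (c + h) - f c) / h * h) with (f (c + h) - f c) in * by (field; lra).
  lra.
Qed.

Lemma neg_of_increasing_at_zeros (f f' : R -> R) a b :
  (forall x, a <= x <= b -> is_derive f x (f' x)) -> f b < 0 ->
  (forall c, a <= c < b -> f c = 0 -> 0 < f' c) ->
  forall x, a <= x <= b -> f x < 0.
Proof.
  intros Hd Hb Hup x0 Hx0. apply Rnot_le_lt; intros Hf0.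
  set (E := fun y => x0 <= y <= b /\ 0 <= f y).
  destruct (completeness E) as [c [Hub Hlub]].
  { exists b; intros y [Hy _]; lra. }
  { exists x0; split; [lra | exact Hf0]. }
  assert (Hx0c : x0 <= c) by (apply Hub; split; [lra | exact Hf0]).
  assert (Hcb : c <= b) by (apply Hlub; intros y [Hy _]; lra).
  assert (Hcont : continuity_pt f c).
  { apply derivable_continuous_pt; exists (f' c). apply is_derive_Reals, Hd; lra. }
  assert (Hright : forall y, c < y <= b -> f y < 0).
  { intros y Hy. apply Rnot_le_lt; intros Hfy.
    assert (y <= c) by (apply Hub; split; [lra | exact Hfy]). lra. }
  assert (Hc_ge : 0 <= f c).
  { apply Rnot_lt_le; intros Hfc.
    destruct (continuity_pt_lt_nbhd f c 0 Hcont Hfc) as [d [Hd0 Hnear]].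
    assert (c <= c - d); [|lra].
    apply Hlub; intros y [Hy Hfy]. apply Rnot_lt_le; intros Hyd.
    assert (y <= c) by (apply Hub; split; [exact Hy | exact Hfy]).
    assert (f y < 0) by (apply Hnear, Rabs_def1; lra). lra. }
  assert (Hcb' : c < b) by (destruct (Req_dec c b); [subst; lra | lra]).
  assert (Hc_le : f c <= 0).
  { apply Rnot_lt_le; intros Hfc.
    destruct (continuity_pt_gt_nbhd f c 0 Hcont Hfc) as [d [Hd0 Hnear]].
    set (y := Rmin (c + d / 2) b).
    assert (Hy : c < y <= b) by (split; [apply Rmin_glb_lt | apply Rmin_r]; lra).
    assert (0 < f y); [|specialize (Hright y Hy); lra].
    assert (y <= c + d / 2) by apply Rmin_l.
    apply Hnear, Rabs_def1; lra. }
  destruct (is_derive_pos_increases_right f c (f' c) b) as [y [Hy Hfy]].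
  - apply Hd; lra.
  - apply Hup; lra.
  - exact Hcb'.
  - specialize (Hright y Hy). lra.
Qed.

Lemma sqr_ratio_nonneg n j : 0 <= INR j ^ 2 / INR n ^ 2.
Proof.
  destruct (Req_dec (INR n) 0) as [E|E].
  - rewrite E; unfold Rdiv; simpl; rewrite Rmult_0_l, Rinv_0; lra.
  - apply Rmult_le_pos; [nra | left; apply Rinv_0_lt_compat; nra].
Qed.

Lemma sqr_ratio_lt_1 n j : (j < n)%nat -> INR j ^ 2 / INR n ^ 2 < 1.
Proof.
  intros Hjn. assert (Hj : INR j < INR n) by (apply lt_INR; exact Hjn).
  pose proof (pos_INR j).
  apply (Rmult_lt_reg_r (INR n ^ 2)); [nra|].
  unfold Rdiv; rewrite Rmult_assoc, Rinv_l by nra; nra.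
Qed.

Lemma xk_sqr n j : (j < n)%nat -> xk n j ^ 2 = 1 - INR j ^ 2 / INR n ^ 2.
Proof. intros Hjn; pose proof (sqr_ratio_lt_1 n j Hjn); unfold xk; apply pow2_sqrt; lra. Qed.

Lemma xk_pos n j : (j < n)%nat -> 0 < xk n j.
Proof. intros Hjn; pose proof (sqr_ratio_lt_1 n j Hjn); apply sqrt_lt_R0; lra. Qed.

Lemma xk_le_1 n j : xk n j <= 1.
Proof.
  pose proof (sqr_ratio_nonneg n j). rewrite <- sqrt_1. apply sqrt_le_1_alt; lra.
Qed.

Lemma xk_decr n j : xk n (S j) <= xk n j.
Proof.
  apply sqrt_le_1_alt. rewrite S_INR. pose proof (pos_INR j).
  destruct (Req_dec (INR n) 0) as [E|E].
  - rewrite E; unfold Rdiv; simpl; rewrite !Rmult_0_l, Rinv_0; lra.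
  - unfold Rdiv. assert (0 < / INR n ^ 2) by (apply Rinv_0_lt_compat; nra). nra.
Qed.

(* Wherever [u_{j+1} = beta u_j], the equation gives
   [(1 - x^2) (u_{j+1} - beta u_j)' = u_j * (this quantity)]. *)
Lemma ratio_discriminant_pos (N J X x : R) :
  0 < J -> 0 < N -> X ^ 2 = 1 - J ^ 2 / N ^ 2 -> 0 < X -> X <= x ->
  let beta := N ^ 2 * X / J in
  0 < (2 * J + 1) * x * beta - (N ^ 2 - J ^ 2) - (1 - x ^ 2) * beta ^ 2.
Proof.
  intros HJ HN HX HX0 Hx beta.
  assert (HN2 : 0 < N ^ 2) by (apply pow_lt; exact HN).
  assert (HJ' : 0 < / J) by (apply Rinv_0_lt_compat; exact HJ).
  assert (Hb : 0 < beta) by (unfold beta, Rdiv; apply Rmult_lt_0_compat; [nra | exact HJ']).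
  assert (HXval : (2 * J + 1) * X * beta - (N ^ 2 - J ^ 2) - (1 - X ^ 2) * beta ^ 2
                  = N ^ 2 * X ^ 2 / J).
  { replace (N ^ 2 - J ^ 2) with (N ^ 2 * X ^ 2) by (rewrite HX; field; lra).
    replace (1 - X ^ 2) with (J ^ 2 / N ^ 2) by lra.
    unfold beta; field; lra. }
  assert (0 < N ^ 2 * X ^ 2 / J)
    by (unfold Rdiv; apply Rmult_lt_0_compat; [apply Rmult_lt_0_compat; nra | exact HJ']).
  assert (0 <= ((2 * J + 1) * beta + beta ^ 2 * (x + X)) * (x - X)) by (apply Rmult_le_pos; nra).
  nra.
Qed.

Definition dCheb_ratio_bound (n j : nat) : R := INR n ^ 2 * xk n j / INR j.

Lemma dCheb_ratio_bound_pos n j : (1 <= j)%nat -> (j < n)%nat -> 0 < dCheb_ratio_bound n j.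
Proof.
  intros Hj Hjn. pose proof (xk_pos n j Hjn).
  assert (0 < INR j) by (apply lt_0_INR; lia). assert (0 < INR n) by (apply lt_0_INR; lia).
  unfold dCheb_ratio_bound, Rdiv. apply Rmult_lt_0_compat; [|apply Rinv_0_lt_compat; lra].
  apply Rmult_lt_0_compat; [apply pow_lt|]; lra.
Qed.

Lemma dCheb_ratio_lt n j :
  (1 <= j)%nat -> (j < n)%nat ->
  (forall x, xk n j <= x -> 0 < dCheb n (S j) x) ->
  forall x, xk n j <= x <= 1 ->
  dCheb n (S j) x < dCheb_ratio_bound n j * dCheb n j x.
Proof.
  intros Hj Hjn Hpos.
  assert (HJ : 0 < INR j) by (apply lt_0_INR; lia).
  assert (HN : 0 < INR n) by (apply lt_0_INR; lia).
  pose proof (xk_sqr n j Hjn) as HX. pose proof (xk_pos n j Hjn) as HX0.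
  pose proof (xk_le_1 n j) as HX1.
  pose proof (ratio_discriminant_pos (INR n) (INR j) (xk n j)) as HP.
  pose proof (dCheb_ratio_bound_pos n j Hj Hjn) as Hb.
  unfold dCheb_ratio_bound in *. set (beta := INR n ^ 2 * xk n j / INR j) in *.
  set (P := fun x => (2 * INR j + 1) * x * beta - (INR n ^ 2 - INR j ^ 2) - (1 - x ^ 2) * beta ^ 2).
  assert (HPx : forall x, xk n j <= x -> 0 < P x) by (intros x Hx; apply HP; auto).
  intros x Hx.
  enough (H : dCheb n (S j) x - beta * dCheb n j x < 0) by lra.
  apply (neg_of_increasing_at_zeros (fun y => dCheb n (S j) y - beta * dCheb n j y)
           (fun y => dCheb n (S (S j)) y - beta * dCheb n (S j) y) (xk n j) 1); [| | |exact Hx].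
  - intros y _. auto_derive_dCheb; ring.
  - assert (Hrec : (2 * INR j + 1) * dCheb n (S j) 1 = (INR n ^ 2 - INR j ^ 2) * dCheb n j 1)
      by (pose proof (dCheb_ode n j 1); lra).
    pose proof (dCheb_at_1_pos n j ltac:(lia)) as Hu1.
    pose proof (HPx 1 HX1) as HP1. unfold P in HP1.
    assert (0 < dCheb n j 1 * P 1) by (apply Rmult_lt_0_compat; auto).
    unfold P in *. apply (Rmult_lt_reg_l (2 * INR j + 1)); [lra|]. nra.
  - intros c Hc Hzero.
    assert (Hu1 : 0 < dCheb n (S j) c) by (apply Hpos; lra).
    assert (Hu0 : 0 < dCheb n j c).
    { assert (0 < beta * dCheb n j c) by lra. nra. }
    assert (Hc2 : 0 < 1 - c ^ 2) by nra.
    assert (E : (1 - c ^ 2) * (dCheb n (S (S j)) c - beta * dCheb n (S j) c) = dCheb n j c * P c).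
    { pose proof (dCheb_ode n j c). replace (dCheb n (S j) c) with (beta * dCheb n j c) in * by lra.
      unfold P; lra. }
    assert (0 < dCheb n j c * P c) by (apply Rmult_lt_0_compat; [exact Hu0 | apply HPx; lra]).
    nra.
Qed.

Lemma dCheb_top_const n x : dCheb n n x = dCheb n n 1.
Proof.
  destruct (MVT_gen (dCheb n n) x 1 (dCheb n (S n))) as [c [_ E]].
  - intros y _; apply is_derive_dCheb.
  - intros y _; apply continuity_pt_dCheb.
  - rewrite (dCheb_above_degree n (S n)) in E by lia. lra.
Qed.

Lemma dCheb_pos_step n j :
  (1 <= j)%nat -> (j < n)%nat ->
  (forall x, xk n (S j) <= x -> 0 < dCheb n (S j) x) ->
  forall x, xk n j <= x -> 0 < dCheb n j x.
Proof.
  intros Hj Hjn Hpos.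
  assert (Hpos' : forall x, xk n j <= x -> 0 < dCheb n (S j) x)
    by (intros x Hx; apply Hpos; pose proof (xk_decr n j); lra).
  assert (Hxj : 0 < dCheb n j (xk n j)).
  { pose proof (dCheb_ratio_lt n j Hj Hjn Hpos' (xk n j) (conj (Rle_refl _) (xk_le_1 n j))).
    pose proof (Hpos' (xk n j) (Rle_refl _)). pose proof (dCheb_ratio_bound_pos n j Hj Hjn).
    nra. }
  intros x Hx. destruct (Req_dec x (xk n j)) as [->|Hne]; [exact Hxj|].
  enough (dCheb n j (xk n j) < dCheb n j x) by lra.
  apply (incr_function_le (dCheb n j) (xk n j) p_infty (dCheb n (S j))); simpl; auto; try lra.
  - intros y Hy _; apply is_derive_dCheb.
  - intros y Hy _; apply Hpos'; exact Hy.
Qed.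

Lemma dCheb_pos_right n j : (1 <= j <= n)%nat -> forall x, xk n j <= x -> 0 < dCheb n j x.
Proof.
  remember (n - j)%nat as d eqn:Hd. revert j Hd.
  induction d as [|d IH]; intros j Hd Hj x Hx.
  - replace j with n by lia. rewrite dCheb_top_const. apply dCheb_at_1_pos; lia.
  - apply (dCheb_pos_step n j); [lia | lia | |exact Hx].
    apply IH; lia.
Qed.

(** * A Sonin-type function *)

(* For [(1 - x^2) u'' - (2K + 1) x u' + (N^2 - K^2) u = 0]:
   the constants in [lyap_den] are those for which, by the equation, the
   derivative of [lyap] takes the manifestly signed form [lyap_deriv]. *)
Section Lyapunov.

Variables (N K a : R) (u u1 u2 : R -> R).

Definition lyap_den (x : R) : R := (N ^ 2 - (K - a) ^ 2) * (1 - x ^ 2) - a * (2 * K - 1 - a).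

Definition lyap_num (x : R) : R := (1 - x ^ 2) * u1 x - a * x * u x.

Definition lyap (x : R) : R := u x ^ 2 + lyap_num x ^ 2 / lyap_den x.

Definition lyap_deriv (x : R) : R :=
  2 * x * (a * u x ^ 2 * lyap_den x ^ 2
           + lyap_num x ^ 2 * ((2 * K - 1 - a) * lyap_den x + (N ^ 2 - (K - a) ^ 2) * (1 - x ^ 2)))
  / ((1 - x ^ 2) * lyap_den x ^ 2).

Lemma lyap_ge_sqr x : 0 < lyap_den x -> u x ^ 2 <= lyap x.
Proof.
  intros HD. unfold lyap.
  assert (0 <= lyap_num x ^ 2 / lyap_den x)
    by (apply Rmult_le_pos; [apply pow2_ge_0 | left; apply Rinv_0_lt_compat; exact HD]).
  lra.
Qed.

Lemma lyap_at_num_root x : lyap_num x = 0 -> lyap x = u x ^ 2.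
Proof. intros H. unfold lyap. rewrite H. unfold Rdiv. ring. Qed.

Hypothesis Du : forall x, is_derive u x (u1 x).
Hypothesis Du1 : forall x, is_derive u1 x (u2 x).
Hypothesis Hode :
  forall x, (1 - x ^ 2) * u2 x - (2 * K + 1) * x * u1 x + (N ^ 2 - K ^ 2) * u x = 0.

Lemma is_derive_lyap x :
  1 - x ^ 2 <> 0 -> lyap_den x <> 0 -> is_derive lyap x (lyap_deriv x).
Proof.
  intros Hx HD.
  assert (E2 : u2 x = ((2 * K + 1) * x * u1 x - (N ^ 2 - K ^ 2) * u x) / (1 - x ^ 2))
    by (pose proof (Hode x); field_simplify_eq; lra).
  unfold lyap, lyap_num, lyap_den in *. auto_derive.
  - repeat split; try (eexists; apply Du || apply Du1). exact HD.
  - erewrite !is_derive_unique by (apply Du || apply Du1). rewrite E2.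
    unfold lyap_deriv, lyap_num, lyap_den. field. split; assumption.
Qed.

Hypothesis HK : 1 <= K.
Hypothesis HKN : K < N.
Hypothesis Ha : 0 < a < K.

Lemma lyap_den_pos X x :
  X ^ 2 = 1 - K ^ 2 / N ^ 2 -> 0 <= x <= X -> 0 < lyap_den x.
Proof.
  intros HX Hx.
  assert (HDX : lyap_den X = (K - a) ^ 2 * (1 - K ^ 2 / N ^ 2) + a)
    by (unfold lyap_den; rewrite HX; field; lra).
  assert (0 <= (K - a) ^ 2 * (1 - K ^ 2 / N ^ 2))
    by (rewrite <- HX; apply Rmult_le_pos; apply pow2_ge_0).
  assert (0 < N ^ 2 - (K - a) ^ 2) by nra.
  assert (x ^ 2 <= X ^ 2) by nra.
  assert (lyap_den X <= lyap_den x) by (unfold lyap_den; nra).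
  lra.
Qed.

Lemma lyap_deriv_pos x :
  0 < x -> x ^ 2 < 1 -> 0 < lyap_den x -> u x <> 0 \/ lyap_num x <> 0 -> 0 < lyap_deriv x.
Proof.
  intros Hx Hx1 HD Hne. unfold lyap_deriv.
  assert (0 < (2 * K - 1 - a) * lyap_den x) by (apply Rmult_lt_0_compat; lra).
  assert (0 < (N ^ 2 - (K - a) ^ 2) * (1 - x ^ 2)) by (apply Rmult_lt_0_compat; nra).
  set (Q := (2 * K - 1 - a) * lyap_den x + (N ^ 2 - (K - a) ^ 2) * (1 - x ^ 2)).
  assert (HQ : 0 < Q) by (unfold Q; lra).
  assert (0 < a * u x ^ 2 * lyap_den x ^ 2 + lyap_num x ^ 2 * Q).
  { assert (0 < lyap_den x ^ 2) by (apply pow_lt; exact HD).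
    assert (0 <= a * u x ^ 2 * lyap_den x ^ 2)
      by (apply Rmult_le_pos; [apply Rmult_le_pos; [lra | apply pow2_ge_0] | lra]).
    assert (0 <= lyap_num x ^ 2 * Q) by (apply Rmult_le_pos; [apply pow2_ge_0 | lra]).
    destruct Hne as [Hu|Hh].
    - assert (0 < a * u x ^ 2 * lyap_den x ^ 2); [|lra].
      apply Rmult_lt_0_compat; [apply Rmult_lt_0_compat; [lra | apply pow2_gt_0; exact Hu] | lra].
    - assert (0 < lyap_num x ^ 2 * Q); [|lra].
      apply Rmult_lt_0_compat; [apply pow2_gt_0; exact Hh | lra]. }
  apply Rdiv_lt_0_compat; [nra|]. apply Rmult_lt_0_compat; [lra | apply pow_lt; exact HD].
Qed.

Lemma lyap_lt w X :
  X ^ 2 = 1 - K ^ 2 / N ^ 2 -> 0 <= w < X ->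
  (forall x, w < x < X -> u x <> 0 \/ lyap_num x <> 0) ->
  lyap w < lyap X.
Proof.
  intros HX Hw Hne.
  assert (HX1 : X ^ 2 < 1).
  { assert (0 < K ^ 2 / N ^ 2) by (apply Rdiv_lt_0_compat; apply pow_lt; lra). lra. }
  destruct (MVT_cor2 lyap lyap_deriv w X (proj2 Hw)) as [c [Ec Hc]].
  - intros x Hx. apply is_derive_Reals, is_derive_lyap; [nra|].
    apply Rgt_not_eq, (lyap_den_pos X); [exact HX | lra].
  - assert (0 < lyap_deriv c * (X - w)); [|lra].
    apply Rmult_lt_0_compat; [|lra].
    apply lyap_deriv_pos; [lra | nra | apply (lyap_den_pos X); [exact HX | lra] | apply Hne; lra].
Qed.

End Lyapunov.

Lemma lyap_slope_bounds (N K X v v1 : R) :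
  0 < K -> 0 < N -> 0 < X -> X ^ 2 = 1 - K ^ 2 / N ^ 2 ->
  0 < v -> 0 < v1 -> v1 < N ^ 2 * X / K * v ->
  0 < (1 - X ^ 2) * v1 / (X * v) < K.
Proof.
  intros HK HN HX0 HX Hv Hv1 Hratio.
  assert (HsX : 0 < 1 - X ^ 2)
    by (replace (1 - X ^ 2) with (K ^ 2 / N ^ 2) by lra; apply Rdiv_lt_0_compat; apply pow_lt; lra).
  assert (HXv : 0 < X * v) by (apply Rmult_lt_0_compat; assumption).
  split; [apply Rdiv_lt_0_compat; [apply Rmult_lt_0_compat|]; assumption|].
  apply (Rmult_lt_reg_r (X * v)); [exact HXv|].
  unfold Rdiv; rewrite Rmult_assoc, Rinv_l, Rmult_1_r by lra.
  apply (Rlt_le_trans _ ((1 - X ^ 2) * (N ^ 2 * X / K * v))); [apply Rmult_lt_compat_l; assumption|].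
  right; replace (1 - X ^ 2) with (K ^ 2 / N ^ 2) by lra. field; lra.
Qed.

Lemma rightmost_zero_location n k omega :
  (1 <= k)%nat -> (k < n)%nat -> is_rightmost_zero n k omega -> 0 <= omega < xk n k.
Proof.
  intros Hk Hkn [Hz Hmax]. rewrite Nat.add_1_r in Hz, Hmax. split.
  - pose proof (Hmax (- omega) (dCheb_opp_root _ _ _ Hz)). lra.
  - apply Rnot_le_lt; intros HX.
    assert (0 < dCheb n (S k) omega); [|lra].
    apply dCheb_pos_right; [lia|]. pose proof (xk_decr n k); lra.
Qed.

Lemma dCheb_abs_lt_at_rightmost_zero n k omega :
  (1 <= k)%nat -> (k < n)%nat -> is_rightmost_zero n k omega ->
  Rabs (dCheb n k omega) < dCheb n k (xk n k).
Proof.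
  intros Hk Hkn Hzero.
  destruct (rightmost_zero_location n k omega Hk Hkn Hzero) as [Hom0 HomX].
  destruct Hzero as [_ Hmax]; rewrite Nat.add_1_r in Hmax.
  assert (Hu1 : forall x, xk n k <= x -> 0 < dCheb n (S k) x)
    by (intros x Hx; apply dCheb_pos_right; [lia | pose proof (xk_decr n k); lra]).
  assert (HuX : 0 < dCheb n k (xk n k)) by (apply dCheb_pos_right; [lia | lra]).
  pose proof (dCheb_ratio_lt n k Hk Hkn Hu1 (xk n k) (conj (Rle_refl _) (xk_le_1 n k))) as Hratio.
  unfold dCheb_ratio_bound in Hratio.
  assert (HK : 1 <= INR k) by (apply (le_INR 1); exact Hk).
  assert (HKN : INR k < INR n) by (apply lt_INR; exact Hkn).
  pose proof (xk_sqr n k Hkn) as HX.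
  (* Chosen so that [lyap_num] vanishes at [xk n k]. *)
  set (a := (1 - xk n k ^ 2) * dCheb n (S k) (xk n k) / (xk n k * dCheb n k (xk n k))).
  assert (Ha : 0 < a < INR k)
    by (apply lyap_slope_bounds with (N := INR n);
        [lra | lra | apply xk_pos, Hkn | exact HX | exact HuX | apply Hu1; lra | exact Hratio]).
  set (L := lyap (INR n) (INR k) a (dCheb n k) (dCheb n (S k))).
  assert (HL : L omega < L (xk n k)).
  { apply (lyap_lt _ _ _ _ _ (dCheb n (S (S k))));
      [intros; apply is_derive_dCheb | intros; apply is_derive_dCheb | exact (dCheb_ode n k)
      | exact HK | exact HKN | exact Ha | exact HX | lra |].
    intros c Hc. destruct (Req_dec (dCheb n k c) 0) as [Hu0|Hu0]; [right|left; exact Hu0].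
    unfold lyap_num; rewrite Hu0, Rmult_0_r, Rminus_0_r.
    apply Rmult_integral_contrapositive; split.
    - pose proof (xk_le_1 n k). nra.
    - intros Hu1c. pose proof (Hmax c Hu1c). lra. }
  assert (Hsq : dCheb n k omega ^ 2 < dCheb n k (xk n k) ^ 2).
  { unfold L in HL. rewrite (lyap_at_num_root _ _ _ _ _ (xk n k)) in HL
      by (unfold lyap_num, a; field; split; [lra | apply Rgt_not_eq, xk_pos, Hkn]).
    pose proof (lyap_ge_sqr (INR n) (INR k) a (dCheb n k) (dCheb n (S k)) omega
                  (lyap_den_pos _ _ _ HK HKN Ha (xk n k) omega HX ltac:(lra))). lra. }
  rewrite <- (Rabs_pos_eq (dCheb n k (xk n k))) by lra.
  apply Rsqr_lt_abs_0. unfold Rsqr. nra.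
Qed.

Lemma dCheb_le_DS n k x : dCheb n k x <= DS n k x.
Proof.
  unfold DS. apply (Rle_trans _ (sqrt (dCheb n k x ^ 2))).
  - rewrite <- Rsqr_pow2, sqrt_Rsqr_abs. apply Rle_abs.
  - apply sqrt_le_1_alt. pose proof (pow2_ge_0 (Derive_n (Sfun n) k x)). lra.
Qed.

Theorem proposition4p1 (n k : nat) (omega : R) :
  (1 <= k)%nat -> (k + 2 <= n)%nat ->
  is_rightmost_zero n k omega ->
  tau n k omega < delta n k.
Proof.
  intros Hk Hn Hz.
  pose proof (dCheb_abs_lt_at_rightmost_zero n k omega Hk ltac:(lia) Hz).
  pose proof (dCheb_le_DS n k (xk n k)).
  pose proof (dCheb_at_1_pos n k ltac:(lia)).
  unfold tau, delta. apply Rmult_lt_compat_r; [apply Rinv_0_lt_compat|]; lra.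
Qed.
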